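(* Let $\mathcal{G}$ be a parity game with a nonempty vertex set and let $T$ be a finite set of tangles of $\mathcal{G}$. Then $\mathtt{search}(\mathcal{G},T)$ (defined in the context) terminates and returns a pair $(T'',t)$ where $t$ is a tangle that is a dominion of $\mathcal{G}$ for the player $\alpha\equiv\mathrm{pr}(t)\pmod 2$.
   Context: Parity games: $\mathcal{G}=(V_0,V_1,E,\mathrm{pr})$, $V=V_0\cup V_1$ finite, partitioned into vertices of Even ($0$) and Odd ($1$); $E\subseteq V\times V$ with every vertex having a successor; $\mathrm{pr}:V\to\{0,\dots,d\}$. $E(u)=\{v:(u,v)\in E\}$, $\mathrm{pr}(U)=\max_{u\in U}\mathrm{pr}(u)$, $\mathrm{pr}^{-1}(p)$ the set of vertices of priority $p$, $\overline{\alpha}=1-\alpha$. A play (infinite path) is won by Even iff the highest priority occurring infinitely often is even, otherwise by Odd; a cycle is won by $\alpha$ if its highest priority has parity $\alpha$. A strategy of $\alpha$ is a partial function $\sigma$ on $V_\alpha$ with $\sigma(v)\in E(v)$; a play is consistent with $\sigma$ if every vertex $v\in\mathrm{dom}(\sigma)$ on it is followed by $\sigma(v)$. A dominion of $\alpha$ is a set $D$ for which $\alpha$ has a strategy $\sigma$ such that all plays starting in $D$ consistent with $\sigma$ stay in $D$ and are won by $\alpha$. For $U\subseteq V$, $\mathcal{G}\cap U$ is the subgame with vertices $V\cap U$ and edges $E\cap(U\times U)$, and $\mathcal{G}\setminus U=\mathcal{G}\cap(V\setminus U)$. A $p$-tangle is a nonempty $U\subseteq V$ with $p=\mathrm{pr}(U)$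 such that for $\alpha\equiv p\pmod 2$ there is a strategy $\sigma:U\cap V_\alpha\to U$ (witness strategy $\sigma_T(U)$) with $(U,E\cap(\sigma\cup((U\cap V_{\overline{\alpha}})\times U)))$ strongly connected and all its cycles won by $\alpha$ (''won by $\alpha$''). For a tangle $t$ won by $\alpha$ in a game with edge set $E$, $E_T(t)=\{v\notin t:\exists u\in t\cap V_{\overline{\alpha}},(u,v)\in E\}$. $T_\alpha$ denotes the tangles of $T$ won by $\alpha$; for a subgame $\mathcal{G}'$, $T\cap\mathcal{G}'$ denotes the tangles of $T$ contained in its vertex set. Tangle attractor: for a game $\mathcal{G}$ with vertices $V$, tangles $T$, player $\alpha$ and $A\subseteq V$, $\mathit{TAttr}^{\mathcal{G},T}_\alpha(A)$ is the least $Z\supseteq A$ containing every $v\in V_\alpha$ with $E(v)\cap Z\neq\emptyset$, every $v\in V_{\overline{\alpha}}$ with $E(v)\subseteq Z$, and every vertex of every $t\in T_\alpha$ with $\emptyset\neq E_T(t)\subseteq Z$ ($E_T$ computed in $\mathcal{G}$). It is computed iteratively together with a strategy $\sigma$ of $\alpha$ (initially empty): when an $\alpha$-vertex is added individually, $\sigma$ maps it to a successor already in $Z$; each $\alpha$-vertex of $A$ gets as $\sigma$-value a successor in $Z$ once one exists; when the vertices of a tangle $t$ are added, $\sigma(u):=\sigma_T(t)(u)$ for every $\alpha$-vertex $u\in t$ not yet in $\mathrm{dom}(\sigma)$. extract-tangles$(Z,\sigma)$, for a subgame $\mathcal{G}'=(V',E')$ with top priority $p$, $\alpha\equiv p$,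 region $Z\subseteq V'$ and strategy $\sigma$: let $Y_Z$ be the greatest $X\subseteq Z$ such that every $v\in X\cap V_{\overline{\alpha}}$ has $E'(v)\subseteq X$ and every $v\in X\cap V_\alpha$ has $\sigma(v)\in X$; let $H$ be the graph on $Y_Z$ with edges $(v,\sigma(v))$ for $v\in Y_Z\cap V_\alpha$ and $(v,w)\in E'$ for $v\in Y_Z\cap V_{\overline{\alpha}}$; return all bottom strongly connected components of $H$ that contain at least one edge of $H$, each with witness strategy $\sigma$ restricted to it. $\mathtt{search}(\mathcal{G},T)$: repeat forever: set $r:=\emptyset$ (a partial function $V\to\mathbb{N}$, the region function) and $Y:=\emptyset$; while $V\setminus\mathrm{dom}(r)\neq\emptyset$: let $\mathcal{G}':=\mathcal{G}\setminus\mathrm{dom}(r)$ with vertex set $V'$, $T':=T\cap\mathcal{G}'$, $p:=\mathrm{pr}(\mathcal{G}')$, $\alpha:=p\bmod 2$; compute $(Z,\sigma):=\mathit{TAttr}^{\mathcal{G}',T'}_\alpha(\mathrm{pr}^{-1}(p)\cap V')$ (the region of priority $p$); let $A:=$ extract-tangles$(Z,\sigma)$; if some $t\in A$ has $E_T(t)=\emptyset$ with $E_T$ computed in the full game $\mathcal{G}$, return $(T\cup Y,t)$; otherwise set $r(v):=p$ for all $v\in Z$ and $Y:=Y\cup A$. After the while-loop, set $T:=T\cup Y$. *)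

From Stdlib Require Import Relations.
From mathcomp Require Import all_boot.
Set Implicit Arguments. Unset Strict Implicit. Unset Printing Implicit Defensive.

Section ParityGames.
(* owner v = false : v belongs to Even (player 0); true : to Odd (player 1).
   A player is a bool; the player "alpha = p mod 2" is [odd p]. *)
Variables (V : finType) (owner : V -> bool) (E : rel V) (pr : V -> nat).

Definition strat := {ffun V -> option V}.
(* a tangle together with its witness strategy sigma_T(t) *)
Definition tangle := ({set V} * strat)%type.

Definition prs (U : {set V}) : nat := \max_(v in U) pr v.
Definition tpl (t : tangle) : bool := odd (prs t.1).

Definition tgraph (U : {set V}) (s : strat) : rel V :=
  fun v w => [&& v \in U, w \in U &
     if owner v == odd (prs U) then s v == Some w else E v w].

Definition is_tangle (t : tangle) : Prop :=
  let U := t.1 in let s := t.2 in let a := odd (prs U) in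
  [/\ U != set0,
      (forall v, v \in U -> owner v = a -> exists2 w, s v = Some w & (w \in U) && E v w),
      (forall v w, s v = Some w -> v \in U /\ owner v = a),
      (forall u v, u \in U -> v \in U -> connect (tgraph U s) u v) &
      (forall c : seq V, c != [::] -> cycle (tgraph U s) c ->
         odd (\max_(v <- c) pr v) = a)].

(* E_T(t) computed in the (sub)game with vertex set W (edges E cap W x W) *)
Definition escapes (W : {set V}) (t : tangle) : {set V} :=
  [set v in W | (v \notin t.1) && [exists u in t.1, (owner u != tpl t) && E u v]].

Definition valid_strat (a : bool) (s : strat) : Prop :=
  forall v w, s v = Some w -> owner v = a /\ E v w.
Definition is_play (p : nat -> V) : Prop := forall i, E (p i) (p i.+1).
Definition consistent (s : strat) (p : nat -> V) : Prop :=
  forall i w, s (p i) = Some w -> p i.+1 = w.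
Definition inf_often (p : nat -> V) (q : nat) : Prop :=
  forall n, exists2 m, n <= m & pr (p m) = q.
Definition won_by (a : bool) (p : nat -> V) : Prop :=
  exists q, [/\ inf_often p q, (forall q', inf_often p q' -> q' <= q) & odd q = a].
Definition dominion (a : bool) (D : {set V}) : Prop :=
  exists s : strat, valid_strat a s /\
    forall p, is_play p -> p 0 \in D -> consistent s p ->
      (forall i, p i \in D) /\ won_by a p.

Definition upd (s : strat) (v w : V) : strat :=
  [ffun x => if x == v then Some w else s x].
Definition merge (s st : strat) (U : {set V}) : strat :=
  [ffun x => if (s x == None) && (x \in U) then st x else s x].

(* One step of computing TAttr^{G',T'}_a(A) together with sigma, where
   G' has vertex set W and Tp = T' are the tangles contained in W. *)
Inductive attr_step (W : {set V}) (Tp : {set tangle}) (a : bool) (A : {set V}) :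
    {set V} * strat -> {set V} * strat -> Prop :=
| AS_pl (Z : {set V}) (s : strat) v w : v \in W -> v \notin Z -> owner v = a -> E v w -> w \in Z ->
    attr_step W Tp a A (Z, s) (v |: Z, upd s v w)
| AS_op (Z : {set V}) (s : strat) v : v \in W -> v \notin Z -> owner v = ~~ a ->
    (forall w, w \in W -> E v w -> w \in Z) ->
    attr_step W Tp a A (Z, s) (v |: Z, s)
| AS_tg (Z : {set V}) (s : strat) t : t \in Tp -> tpl t = a -> escapes W t != set0 ->
    escapes W t \subset Z -> ~~ (t.1 \subset Z) ->
    attr_step W Tp a A (Z, s) (Z :|: t.1, merge s t.2 t.1)
| AS_base (Z : {set V}) (s : strat) v w : v \in A -> owner v = a -> s v = None -> w \in W -> E v w ->
    w \in Z -> attr_step W Tp a A (Z, s) (Z, upd s v w).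

Definition closed_reg (W : {set V}) (a : bool) (s : strat) (X : {set V}) : bool :=
  [forall v in X, if owner v == a then (if s v is Some w then w \in X else false)
                  else [forall w in W, E v w ==> (w \in X)]].
Definition core (W : {set V}) (a : bool) (s : strat) (Z : {set V}) : {set V} :=
  \bigcup_(X : {set V} | (X \subset Z) && closed_reg W a s X) X.
Definition hgraph (W : {set V}) (a : bool) (s : strat) (Y : {set V}) : rel V :=
  fun v w => [&& v \in Y, w \in Y &
    if owner v == a then s v == Some w else E v w && (w \in W)].
Definition bscc (e : rel V) (C : {set V}) : bool :=
  [exists v in C, C == [set w | connect e v w && connect e w v]] &&
  [forall x in C, forall y, e x y ==> (y \in C)].
Definition restrict (s : strat) (C : {set V}) : strat :=
  [ffun x => if x \in C then s x else None].
Definition extract (W : {set V}) (a : bool) (s : strat) (Z : {set V}) : {set tangle} :=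
  let H := hgraph W a s (core W a s Z) in
  (fun C => (C, restrict s C)) @:
    [set C : {set V} | bscc H C & [exists v in C, exists w in C, H v w]].

(* the region function r is represented by its domain R *)
Inductive sstate :=
| SLoop of {set tangle} & {set tangle} & {set V}                  (* T, Y, dom r *)
| SAttr of {set tangle} & {set tangle} & {set V} & {set V} & strat (* T, Y, dom r, Z, sigma *)
| SDone of {set tangle} & tangle.                                 (* returned (T'', t) *)

Definition subT (T : {set tangle}) (R : {set V}) : {set tangle} :=
  [set t in T | t.1 \subset ~: R].
Definition sub_pl (R : {set V}) : bool := odd (prs (~: R)).
Definition sub_base (R : {set V}) : {set V} :=
  [set v in ~: R | pr v == prs (~: R)].
Definition astep (T : {set tangle}) (R : {set V}) :=
  attr_step (~: R) (subT T R) (sub_pl R) (sub_base R).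

Inductive search_step : sstate -> sstate -> Prop :=
| SS_start T Y R : ~: R != set0 ->
    search_step (SLoop T Y R) (SAttr T Y R (sub_base R) [ffun _ => None])
| SS_round T Y R : ~: R == set0 ->
    search_step (SLoop T Y R) (SLoop (T :|: Y) set0 set0)
| SS_attr T Y R Z s Z' s' : astep T R (Z, s) (Z', s') ->
    search_step (SAttr T Y R Z s) (SAttr T Y R Z' s')
| SS_return T Y R Z s t : (forall zs, ~ astep T R (Z, s) zs) ->
    t \in extract (~: R) (sub_pl R) s Z -> escapes setT t == set0 ->
    search_step (SAttr T Y R Z s) (SDone (T :|: Y) t)
| SS_next T Y R Z s : (forall zs, ~ astep T R (Z, s) zs) ->
    (forall t, t \in extract (~: R) (sub_pl R) s Z -> escapes setT t != set0) ->
    search_step (SAttr T Y R Z s)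
                (SLoop T (Y :|: extract (~: R) (sub_pl R) s Z) (R :|: Z)).

Definition is_done (st : sstate) : Prop :=
  match st with SDone _ _ => True | _ => False end.

End ParityGames.

From Pilot Require Import Defs.
From Stdlib Require Import Relations.
From mathcomp Require Import all_boot boolp zify.
Set Implicit Arguments. Unset Strict Implicit. Unset Printing Implicit Defensive.

(* While a region is attracted towards the top priority p of the remaining
   subgame, every cycle of the region that follows the attractor strategy is
   won by alpha = p mod 2: such a cycle meets a vertex of priority p, or stays
   in the region as it was before the last step, or stays inside the tangle
   just attracted.  Hence every extracted bottom SCC is a tangle won by alpha,
   and one without escapes is a dominion: plays consistent with its strategy
   stay inside it, and the vertex of highest priority seen infinitely often
   lies on one of its cycles.
   For termination, regions only grow inside a round, and a round that
   exhausts the game extracts a tangle not yet in T.  Indeed the last region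
   contains a bottom SCC, and an old tangle all of whose escapes lead into
   earlier regions has no escapes at all, so it would have been returned: an
   escape into a region Z would have made Z attract either the tangle itself
   (if it is won by the player of Z) or the opponent vertex leaving it. *)

Lemma setUDr (T : finType) (A B : {set T}) : A :|: (B :\: A) = A :|: B.
Proof. by apply/setP=> x; rewrite !inE; case: (x \in A). Qed.

Lemma setC0_neq0 (T : finType) : 0 < #|T| -> ~: (set0 : {set T}) != set0.
Proof. by rewrite setC0 -card_gt0 cardsT. Qed.

Lemma card_setCU_le (T : finType) (A B : {set T}) : #|~: (A :|: B)| <= #|~: A|.
Proof. by rewrite subset_leq_card // setCS subsetUl. Qed.

Lemma card_setCU_lt (T : finType) (A B : {set T}) :
  ~~ (B \subset A) -> #|~: (A :|: B)| < #|~: A|.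
Proof.
case/subsetPn=> x xB xA; apply: proper_card; apply/properP; split.
  by rewrite setCS subsetUl.
by exists x; rewrite !inE ?negbK ?xA ?xB ?orbT.
Qed.

Lemma acc_lex (S : Type) (r : S -> S -> Prop) (P : S -> Prop) (f g : S -> nat) :
  (forall x y, P x -> r x y -> P y /\ ((f y < f x) || (f y == f x) && (g y < g x))) ->
  forall x, P x -> Acc (fun y x => r x y) x.
Proof.
move=> dec; suff acc n m x : f x < n -> g x < m -> P x -> Acc (fun y x => r x y) x.
  by move=> x; apply: (acc (f x).+1 (g x).+1).
elim: n m x => [//|n IHn] m; elim: m => [//|m IHm] x fx gx Px.
constructor=> y rxy; have [Py /orP[fy|/andP[/eqP fy gy]]] := dec x y Px rxy.
  by apply: (IHn (g y).+1) => //; lia.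
by apply: IHm => //; lia.
Qed.

Lemma connect_closed (V : finType) (e : rel V) (A : {pred V}) x y :
  (forall u v, u \in A -> e u v -> v \in A) -> x \in A -> connect e x y -> y \in A.
Proof.
move=> clP Px /connectP [p + ->]; elim: p x Px => //= z p IH x Px /andP[exz pz].
exact: IH (clP _ _ Px exz) pz.
Qed.

Lemma cycle_closed (V : finType) (e : rel V) c (Q : {set V}) x :
  (forall u v, u \in c -> u \in Q -> e u v -> v \in Q) ->
  cycle e c -> x \in c -> x \in Q -> {subset c <= Q}.
Proof.
move=> Q_closed + xc xQ y yc; have [i s' c_rot] := rot_to xc.
rewrite -(rot_cycle i) c_rot /= => x_walk.
have in_c : {subset x :: rcons s' x <= c}.
  by move=> z; rewrite -rcons_cons mem_rcons inE -c_rot mem_rot => /orP[/eqP->|].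
pose e_c := [rel u v | e u v && (u \in c)].
have c_walk : path e_c x (rcons s' x).
  apply: (sub_in_path (P := [in c])) x_walk; last exact/allP.
  by move=> u v uc _ euv; rewrite /= euv uc.
apply: (connect_closed (A := Q)) xQ (path_connect c_walk _).
  by move=> u v uQ /andP[euv uc]; apply: Q_closed euv.
by rewrite -rcons_cons mem_rcons inE -c_rot mem_rot yc orbT.
Qed.

Lemma cycle_in_set1 (V : finType) (e : rel V) c v :
  c != [::] -> {subset c <= [set v]} -> cycle e c -> e v v.
Proof.
case: c => [//|x c] _ sub; rewrite /= rcons_path => /andP[_].
have /set1P-> := sub (last x c) (mem_last x c).
by have /set1P-> := sub x (mem_head x c).
Qed.

Lemma bigmax_seq_eq (T : eqType) (F : T -> nat) (c : seq T) m x :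
  {in c, forall y, F y <= m} -> x \in c -> F x = m -> \max_(y <- c) F y = m.
Proof.
move=> le_m xc Fx; apply/eqP; rewrite eqn_leq; apply/andP; split.
  by apply/bigmax_leqP_seq => y yc _; apply: le_m.
by rewrite -Fx; apply: (leq_bigmax_seq (P := xpredT)).
Qed.

Section Graphs.
Variables (V : finType) (e : rel V).

Lemma bscc_closed C : bscc e C -> forall x y, x \in C -> e x y -> y \in C.
Proof. by case/andP=> _ /forall_inP bot x y xC /(implyP (forallP (bot x xC) y)). Qed.

Lemma bscc_connect C x y : bscc e C -> x \in C -> y \in C -> connect e x y.
Proof.
case/andP=> /exists_inP [v _ /eqP defC] _; rewrite defC !inE.
by case/andP=> _ vx /andP[xv _]; apply: connect_trans vx xv.
Qed.

Lemma bscc_cycle C x y z : bscc e C -> x \in C -> e x y -> z \in C ->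
  exists2 c, cycle e (z :: c) & {subset c <= C}.
Proof.
move=> bC xC exy zC; have yC := bscc_closed bC xC exy.
have /connectP [p1 zp1 x_def] := bscc_connect bC zC xC.
have /connectP [p2 yp2 z_def] := bscc_connect bC yC zC.
have walk : path e z (rcons (p1 ++ belast y p2) z).
  rewrite rcons_cat; have -> : rcons (belast y p2) z = y :: p2 by rewrite z_def -lastI.
  by rewrite cat_path zp1 -x_def /= exy.
exists (p1 ++ belast y p2) => // u uc; apply: (connect_closed (A := C)) (bscc_closed bC) zC _.
by apply: (path_connect walk); rewrite inE mem_rcons inE uc !orbT.
Qed.

Lemma bscc_exists x0 : (forall x, connect e x0 x -> exists y, e x y) ->
  exists C, bscc e C && [exists x in C, exists y in C, e x y].
Proof.
move=> succ; pose reach x := [set y | connect e x y].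
case: (arg_minnP (fun x => #|reach x|) (connect0 e x0)) => v x0v v_min.
pose C := [set y | connect e v y && connect e y v].
have vC : v \in C by rewrite inE connect0.
have C_bot x y : x \in C -> e x y -> y \in C.
  rewrite !inE => /andP[vx _] exy; have vy := connect_trans vx (connect1 exy).
  have /eqP reach_y : reach y == reach v.
    rewrite eqEcard v_min ?(connect_trans x0v vy) // andbT.
    by apply/subsetP=> w; rewrite !inE; apply: connect_trans.
  have : v \in reach v by rewrite inE connect0.
  by rewrite -reach_y inE vy.
have [w evw] := succ v x0v.
exists C; apply/andP; split.
  apply/andP; split; first by apply/exists_inP; exists v.
  by apply/forall_inP=> x xC; apply/forallP=> y; apply/implyP; apply: C_bot.
by apply/exists_inP; exists v => //; apply/exists_inP; exists w => //; apply: C_bot evw.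
Qed.

Lemma cycle_trichotomy (e' : rel V) (N P : {set V}) c :
  (forall x y, e' x y -> x \notin N -> y \notin N -> e x y || (x \in P)) ->
  (forall x y, e' x y -> x \notin N -> y \in N -> x \in P) ->
  cycle e' c -> [\/ has (mem P) c, cycle e c | {subset c <= N}].
Proof.
move=> old_edge into_N cyc.
have [|noP] := boolP (has (mem P) c); first by constructor 1.
have [cN|/allPn[x xc /= xN]] := boolP (all (mem N) c); first by constructor 3; apply/allP.
have outN : {subset c <= ~: N}.
  apply: (cycle_closed (x := x)) cyc xc _; last by rewrite inE.
  move=> u v uc; rewrite !inE => uN e'uv; apply/negP => vN.
  by have := hasPn noP u uc; rewrite /= (into_N _ _ e'uv uN vN).
constructor 2; apply: (sub_in_cycle (P := [in c])) cyc; last exact/allP.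
move=> u v uc vc e'uv.
have := old_edge _ _ e'uv; rewrite -!in_setC !outN // => /(_ isT isT).
by have := hasPn noP u uc => /= /negbTE ->; rewrite orbF.
Qed.

End Graphs.

Section Plays.
Variables (V : finType) (pr : V -> nat).

Definition cycles_won (e : rel V) (b : bool) :=
  forall c, c != [::] -> cycle e c -> odd (\max_(v <- c) pr v) = b.

Definition recurrent (p : nat -> V) (v : V) := forall n, exists2 m, n <= m & p m = v.

Lemma eventually_recurrent p : exists N, forall m, N <= m -> recurrent p (p m).
Proof.
suff [N recN] : exists N, forall m, N <= m -> p m \in enum V -> recurrent p (p m).
  by exists N => m /recN; rewrite mem_enum; apply.
elim: (enum V) => [|v l [N recN]]; first by exists 0.
have [v_rec|/existsNP [n v_gone]] := pselect (recurrent p v).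
  by exists N => m /recN; rewrite inE => + /orP[/eqP->|]; [move=> _|apply].
exists (maxn N n) => m; rewrite geq_max inE => /andP[Nm nm] /orP[/eqP pm|]; last exact: recN.
by case: v_gone; exists m.
Qed.

Lemma play_cycle (e : rel V) p m d : (forall i, e (p i) (p i.+1)) ->
  p (m + d.+1) = p m -> cycle e [seq p i | i <- iota m d.+1].
Proof.
move=> walk ret /=; rewrite -{2}ret -addSnnS.
have -> : rcons [seq p i | i <- iota m.+1 d] (p (m.+1 + d)) = [seq p i | i <- iota m.+1 d.+1].
  by rewrite -[d.+1]addn1 iotaD map_cat cats1.
by elim: d.+1 m {ret} => //= k IH m; rewrite walk IH.
Qed.

Lemma cycles_won_play (e : rel V) (b : bool) p :
  (forall i, e (p i) (p i.+1)) -> cycles_won e b -> won_by pr b p.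
Proof.
move=> walk won; have [N recN] := eventually_recurrent p.
pose L := [set v | `[< recurrent p v >]].
have inL m : N <= m -> p m \in L by move=> Nm; rewrite inE; apply/asboolP/recN.
case: (@arg_maxnP _ (p N) [in L] pr (inL N (leqnn N))) => v vL v_max.
have below m : N <= m -> pr (p m) <= pr v by move=> /inL /v_max.
have v_rec : recurrent p v by move: vL; rewrite inE => /asboolP.
exists (pr v); split.
- by move=> n; have [m nm pm] := v_rec n; exists m; rewrite ?pm.
- by move=> q /(_ N) [m Nm <-]; apply: below.
have [m1 Nm1 pm1] := v_rec N; have [m2 m12 pm2] := v_rec m1.+1.
have cyc : cycle e [seq p i | i <- iota m1 (m2 - m1)].
  rewrite -(subnSK m12); apply: play_cycle walk _.
  by rewrite addnS -addSn subnKC // pm1 pm2.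
rewrite -(won _ _ cyc); last by rewrite -(subnSK m12).
congr odd; symmetry; apply: (bigmax_seq_eq (x := p m1)) _ _ (congr1 pr pm1).
  by move=> y /mapP [i]; rewrite mem_iota => /andP[m1i _] ->; apply/below/(leq_trans Nm1).
by rewrite -(subnSK m12) /= inE eqxx.
Qed.

End Plays.

Section Game.
Variables (V : finType) (owner : V -> bool) (E : rel V) (pr : V -> nat).

Lemma tangle_dominion t : is_tangle owner E pr t ->
  escapes owner E pr setT t = set0 -> dominion owner E pr (tpl pr t) t.1.
Proof.
case=> _ t_strat t_dom _ t_cycles no_esc; exists t.2; split.
  move=> v w tvw; have [vt ov] := t_dom _ _ tvw; split=> //.
  by have [w' + /andP[_]] := t_strat v vt ov; rewrite tvw => -[->].
move=> p play p0 cons.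
have stay i : p i \in t.1.
  elim: i => [//|i IH].
  have [/eqP oi|oi] := boolP (owner (p i) == tpl pr t).
    by have [w tw /andP[wt _]] := t_strat _ IH oi; rewrite (cons i w tw).
  apply: contraT => ni; have : p i.+1 \in escapes owner E pr setT t.
    by rewrite inE in_setT ni; apply/exists_inP; exists (p i); rewrite ?oi ?play.
  by rewrite no_esc inE.
split=> //; apply: cycles_won_play t_cycles => i.
rewrite /tgraph !stay /=; case: ifP => [/eqP oi|_]; last exact: play.
by have [w tw _] := t_strat _ (stay i) oi; rewrite tw (cons i w tw).
Qed.

Section Core.
Variables (W : {set V}) (b : bool) (s : strat V) (Z : {set V}).
Local Notation Y := (core owner E W b s Z).

Lemma core_max (X : {set V}) : X \subset Z -> closed_reg owner E W b s X -> X \subset Y.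
Proof. by move=> XZ clX; apply/subsetP=> v vX; apply/bigcupP; exists X; rewrite ?XZ. Qed.

Lemma core_sub : Y \subset Z.
Proof. by apply/bigcupsP=> X /andP[]. Qed.

Lemma core_strat v : v \in Y -> owner v = b -> exists2 w, s v = Some w & w \in Y.
Proof.
case/bigcupP=> X /andP[XZ clX] vX ov; have /subsetP XY := core_max XZ clX.
have := forall_inP clX v vX; rewrite ov eqxx.
by case: (s v) => // w wX; exists w; rewrite ?XY.
Qed.

Lemma core_opponent v : v \in Y -> owner v != b -> forall w, w \in W -> E v w -> w \in Y.
Proof.
case/bigcupP=> X /andP[XZ clX] vX ov w wW Evw; have /subsetP XY := core_max XZ clX.
have := forall_inP clX v vX; rewrite (negbTE ov) => /forall_inP/(_ w wW).
by rewrite Evw => /XY.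
Qed.

End Core.

Definition tangles (T : {set tangle V}) := {in T, forall t, is_tangle owner E pr t}.

Section Attractor.
Variable R : {set V}.
Local Notation W := (~: R).
Local Notation a := (sub_pl pr R).
Local Notation A := (sub_base pr R).

Definition region_graph (Z : {set V}) (s : strat V) : rel V := fun x y =>
  [&& x \in Z, y \in Z & if owner x == a then s x == Some y else E x y && (y \in W)].

Record attr_inv (Z : {set V}) (s : strat V) : Prop := {
  attr_sub : Z \subset W;
  attr_base : A \subset Z;
  attr_strat : forall x y, s x = Some y -> [/\ x \in Z, owner x = a, E x y & y \in Z];
  attr_undef : forall x, x \in Z -> owner x = a -> s x = None -> x \in A;
  attr_closed : forall x, x \in Z -> owner x != a -> x \notin A ->
    forall y, y \in W -> E x y -> y \in Z;
  attr_cycles : cycles_won pr (region_graph Z s) a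
}.

Lemma in_sub_base x : (x \in A) = (x \in W) && (pr x == prs pr W).
Proof. by rewrite inE. Qed.

Lemma sub_base_nonempty : ~: R != set0 -> exists v, v \in A.
Proof.
case/set0Pn=> x xW; have W0 : 0 < #|W| by apply/card_gt0P; exists x.
have [m mW m_max] := eq_bigmax_cond pr W0.
by exists m; rewrite in_sub_base mW /prs m_max eqxx.
Qed.

Lemma cycle_base_won c : {subset c <= W} -> has (mem A) c ->
  odd (\max_(x <- c) pr x) = a.
Proof.
move=> cW /hasP [x xc]; rewrite /= in_sub_base => /andP[_ /eqP px].
rewrite (bigmax_seq_eq _ xc px) // => y /cW yW.
exact: (leq_bigmax_cond (P := mem W)).
Qed.

Lemma region_cycles_extend (Z N : {set V}) (s s' : strat V) :
  attr_inv Z s -> N \subset W -> [disjoint N & Z] ->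
  (forall x, x \in Z -> x \notin A -> s' x = s x) ->
  (forall c, c != [::] -> {subset c <= N} -> cycle (region_graph (Z :|: N) s') c ->
     odd (\max_(x <- c) pr x) = a) ->
  cycles_won pr (region_graph (Z :|: N) s') a.
Proof.
move=> [ZW _ s_ok _ Z_closed Z_cycles] NW NZ s'_old N_cycles c c0 cyc.
have inZ x : x \in Z :|: N -> x \notin N -> x \in Z by rewrite inE => /orP[|->].
have cW : {subset c <= W}.
  move=> x xc; have /and3P[+ _ _] := next_cycle cyc xc.
  by rewrite inE => /orP[/(subsetP ZW)|/(subsetP NW)].
case: (@cycle_trichotomy _ (region_graph Z s) _ N A c _ _ cyc).
- move=> x y /and3P[xZN yZN exy] xN yN; have xZ := inZ _ xZN xN.
  rewrite /region_graph xZ (inZ _ yZN yN) /=.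
  by case: (x \in A) / boolP => xA; rewrite ?orbT // orbF -s'_old.
- move=> x y /and3P[xZN _ exy] xN yN; have xZ := inZ _ xZN xN.
  apply: contraT => xA; have yZ : y \in Z.
    move: exy; rewrite s'_old //; case: ifP => [_ /eqP/s_ok[]//|/negbT ox /andP[Exy yW]].
    exact: Z_closed _ xZ ox xA _ yW Exy.
  by have := disjointFr NZ yN; rewrite yZ.
- exact: cycle_base_won.
- exact: Z_cycles.
- by move=> cN; apply: N_cycles.
Qed.

Lemma attr_inv_extend (Z N : {set V}) (s s' : strat V) :
  attr_inv Z s -> N \subset W -> [disjoint N & Z] ->
  (forall x, x \in Z -> x \notin A -> s' x = s x) ->
  (forall x, s' x = None -> s x = None) ->
  (forall x y, s' x = Some y -> [/\ x \in Z :|: N, owner x = a, E x y & y \in Z :|: N]) ->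
  (forall x, x \in N -> owner x = a -> s' x != None) ->
  (forall x, x \in N -> owner x != a -> forall y, y \in W -> E x y -> y \in Z :|: N) ->
  (forall c, c != [::] -> {subset c <= N} -> cycle (region_graph (Z :|: N) s') c ->
     odd (\max_(x <- c) pr x) = a) ->
  attr_inv (Z :|: N) s'.
Proof.
move=> I NW NZ s'_old s'_none s'_ok N_def N_closed N_cycles.
case: (I) => ZW AZ _ undef Z_closed _; split=> //.
- by rewrite subUset ZW.
- exact: subset_trans AZ (subsetUl Z N).
- move=> x; rewrite inE => /orP[xZ|xN] ox; first by move/s'_none; apply: undef.
  by move/eqP; rewrite (negbTE (N_def x xN ox)).
- move=> x; rewrite inE => /orP[xZ|xN] ox xA y yW Exy; last exact: N_closed x xN ox y yW Exy.
  by rewrite inE (Z_closed x xZ ox xA y yW Exy).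
- exact: region_cycles_extend I NW NZ s'_old N_cycles.
Qed.

Lemma attr_inv_start : attr_inv A [ffun=> None].
Proof.
split=> //.
- by apply/subsetP=> x; rewrite in_sub_base => /andP[].
- by move=> x y; rewrite ffunE.
- by move=> x xA _ /negP.
case=> [//|x c] _ cyc; have cA : {subset x :: c <= A}.
  by move=> y yc; have /and3P[] := next_cycle cyc yc.
apply: cycle_base_won; last by apply/hasP; exists x; [apply: mem_head|apply/cA/mem_head].
by move=> y /cA; rewrite in_sub_base => /andP[].
Qed.

Lemma updE (s : strat V) v w x : upd s v w x = if x == v then Some w else s x.
Proof. by rewrite ffunE. Qed.

Lemma mergeE (s st : strat V) U x :
  Defs.merge s st U x = if (s x == None) && (x \in U) then st x else s x.
Proof. by rewrite ffunE. Qed.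

Lemma attr_inv_player Z s v w : attr_inv Z s -> v \in W -> v \notin Z ->
  owner v = a -> E v w -> w \in Z -> attr_inv (v |: Z) (upd s v w).
Proof.
move=> I vW vZ ov Evw wZ; have [_ _ s_ok _ _ _] := I.
rewrite setUC; apply: (attr_inv_extend I) => //.
- by rewrite sub1set.
- by rewrite disjoints1.
- by move=> x xZ _; rewrite updE; case: eqP xZ => // ->; rewrite (negbTE vZ).
- by move=> x; rewrite updE; case: eqP.
- move=> x y; rewrite updE !inE; case: eqP => [-> [<-]|_ /s_ok[-> -> -> ->]] //.
  by rewrite wZ orbT.
- by move=> x /set1P->; rewrite updE eqxx.
- by move=> x /set1P->; rewrite ov eqxx.
move=> c c0 cv /(cycle_in_set1 c0 cv).
rewrite /region_graph updE eqxx ov eqxx => /and3P[_ _ /eqP[wv]].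
by rewrite -wv wZ in vZ.
Qed.

Lemma attr_inv_opponent Z s v : attr_inv Z s -> v \in W -> v \notin Z ->
  owner v = ~~ a -> (forall w, w \in W -> E v w -> w \in Z) -> attr_inv (v |: Z) s.
Proof.
move=> I vW vZ ov v_closed; have [_ _ s_ok _ _ _] := I.
have ova : owner v != a by rewrite ov; case: (a).
rewrite setUC; apply: (attr_inv_extend I) => //.
- by rewrite sub1set.
- by rewrite disjoints1.
- by move=> x y /s_ok[xZ -> Exy yZ]; rewrite !inE xZ yZ.
- by move=> x /set1P-> ov'; rewrite ov' eqxx in ova.
- by move=> x /set1P-> _ y yW Evy; rewrite inE v_closed.
move=> c c0 cv /(cycle_in_set1 c0 cv).
rewrite /region_graph (negbTE ova) => /and3P[_ _ /andP[Evv _]].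
by rewrite v_closed in vZ.
Qed.

Lemma attr_inv_tangle Z s t : attr_inv Z s -> is_tangle owner E pr t ->
  tpl pr t = a -> t.1 \subset W -> escapes owner E pr W t \subset Z ->
  attr_inv (Z :|: t.1) (Defs.merge s t.2 t.1).
Proof.
move=> I [_ t_strat t_dom _ t_cycles] ta tW esc.
have [_ _ s_ok undef _ _] := I.
have t2_ok x y : t.2 x = Some y -> [/\ x \in t.1, owner x = a, E x y & y \in t.1].
  move=> txy; have [xt ox] := t_dom _ _ txy.
  have [w + /andP[wt Exw]] := t_strat x xt ox; rewrite txy => -[->].
  by split; rewrite // -ta.
have s_none x : x \notin Z -> s x = None.
  by case sx: (s x) => [y|//]; have [->] := s_ok _ _ sx.
have mergeN x : x \in t.1 -> x \notin Z -> Defs.merge s t.2 t.1 x = t.2 x.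
  by move=> xt xZ; rewrite mergeE s_none ?xt.
pose N := t.1 :\: Z; have ZN : Z :|: N = Z :|: t.1 by rewrite setUDr.
rewrite -ZN; apply: (attr_inv_extend I).
- by apply: subset_trans (subsetDl _ _) tW.
- by have /subsetDP[] := subxx N.
- move=> x xZ xA; rewrite mergeE; case sx: (s x) => [//|] /=.
  case: ifP => // _; case txy: (t.2 x) => [y|//]; have [_ ox _ _] := t2_ok _ _ txy.
  by rewrite (undef x xZ ox sx) in xA.
- by move=> x; rewrite mergeE; case: (s x).
- move=> x y; rewrite ZN !inE mergeE.
  by case: ifP => [_ /t2_ok|_ /s_ok] [xZ ox Exy yZ]; split; rewrite ?xZ ?yZ ?orbT.
- move=> x; rewrite inE => /andP[xZ xt] ox; rewrite mergeN //.
  by rewrite -ta in ox; have [w -> _] := t_strat x xt ox.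
- move=> x; rewrite inE ZN => /andP[xZ xt] ox y yW Exy.
  rewrite inE; case yt: (y \in t.1); rewrite ?orbT // (subsetP esc) //.
  by rewrite inE yW yt; apply/exists_inP; exists x; rewrite ?ta ?ox.
move=> c c0 cN cyc; rewrite -ta; apply: t_cycles c0 _.
apply: (sub_in_cycle (P := [in N])) cyc; last by apply/allP=> x /cN.
move=> x y; rewrite !inE => /andP[xZ xt] /andP[yZ yt] /and3P[_ _].
rewrite /tgraph xt yt /= mergeN // -[odd _]/(tpl pr t) ta.
by case: ifP => // _ /andP[].
Qed.

Lemma attr_inv_base Z s v w : attr_inv Z s -> v \in A -> owner v = a ->
  s v = None -> w \in W -> E v w -> w \in Z -> attr_inv Z (upd s v w).
Proof.
move=> I vA ov sv wW Evw wZ; have [_ AZ s_ok _ _ _] := I.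
rewrite -[Z]setU0; apply: (attr_inv_extend I).
- exact: sub0set.
- by rewrite -setI_eq0 set0I.
- by move=> x _ xA; rewrite updE; case: eqP xA => // ->; rewrite vA.
- by move=> x; rewrite updE; case: eqP.
- move=> x y; rewrite setU0 updE.
  by case: eqP => [-> [<-]|_ /s_ok //]; split=> //; apply: (subsetP AZ).
- by move=> x; rewrite inE.
- by move=> x; rewrite inE.
by case=> [//|x c] _ /(_ x (mem_head x c)); rewrite inE.
Qed.

Lemma attr_step_inv T zs zs' : tangles T -> astep owner E pr T R zs zs' ->
  attr_inv zs.1 zs.2 -> attr_inv zs'.1 zs'.2.
Proof.
move=> T_tangles; case=> [Z s v w|Z s v|Z s t|Z s v w] /=.
- by move=> vW vZ ov Evw wZ I; apply: attr_inv_player.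
- by move=> vW vZ ov v_closed I; apply: attr_inv_opponent.
- rewrite inE => /andP[tT tW] ta _ esc _ I.
  exact: attr_inv_tangle I (T_tangles t tT) ta tW esc.
- by move=> vA ov sv wW Evw wZ I; apply: attr_inv_base.
Qed.

(* Attracting n new vertices lowers the first summand by 3n and raises the
   second by at most n; the weight 3 also puts the first attractor state of a
   round below the loop state 3 |W| that precedes it. *)
Definition attr_measure (Z : {set V}) (s : strat V) :=
  3 * #|~: (R :|: Z)| + #|[set x in Z | s x == None]|.

Lemma attr_measure_extend (Z N : {set V}) (s s' : strat V) :
  N \subset ~: (R :|: Z) -> N != set0 -> (forall x, s' x = None -> s x = None) ->
  attr_measure (Z :|: N) s' < attr_measure Z s.
Proof.
move=> N_out N0 s'_none.
have out_split : #|~: (R :|: (Z :|: N))| + #|N| = #|~: (R :|: Z)|.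
  by rewrite setUA setCU -setDE -(cardsID N (~: (R :|: Z))) (setIidPr N_out) addnC.
have none_le : #|[set x in Z :|: N | s' x == None]| <= #|[set x in Z | s x == None]| + #|N|.
  apply: leq_trans (leq_card_setU _ _); apply/subset_leq_card/subsetP => x.
  by rewrite !inE => /andP[/orP[xZ|->] /eqP/s'_none->]; rewrite ?xZ ?orbT.
have N_pos : 0 < #|N| by rewrite card_gt0.
rewrite /attr_measure; lia.
Qed.

Lemma attr_measure_start : ~: R != set0 -> (attr_measure A [ffun=> None]).+1 < 3 * #|W|.
Proof.
case/sub_base_nonempty=> v vA; have AW : A \subset W by apply/subsetP=> x /[!in_sub_base]/andP[].
rewrite /attr_measure; have -> : [set x in A | ([ffun=> None] : strat V) x == None] = A.
  by apply/setP=> x; rewrite !inE ffunE andbT.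
have out_split : #|~: (R :|: A)| + #|A| = #|W|.
  by rewrite setCU -setDE -(cardsID A W) (setIidPr AW) addnC.
have A_pos : 0 < #|A| by apply/card_gt0P; exists v.
lia.
Qed.

Lemma attr_measure_assign (Z : {set V}) (s : strat V) v w :
  v \in Z -> s v = None -> attr_measure Z (upd s v w) < attr_measure Z s.
Proof.
move=> vZ sv; rewrite ltn_add2l; apply/proper_card/properP; split.
  by apply/subsetP=> x; rewrite !inE updE; case: (x =P v); rewrite ?andbF.
by exists v; rewrite !inE ?updE ?eqxx /= ?vZ ?sv.
Qed.

Lemma attr_step_measure T zs zs' : astep owner E pr T R zs zs' -> attr_inv zs.1 zs.2 ->
  attr_measure zs'.1 zs'.2 < attr_measure zs.1 zs.2.
Proof.
have upd_none (s : strat V) v w x : upd s v w x = None -> s x = None.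
  by rewrite updE; case: eqP.
case=> [Z s v w vW vZ _ _ _|Z s v vW vZ _ _|Z s t tT _ _ _ tZ|Z s v w vA _ sv _ _ _] /= I.
- rewrite setUC; apply: attr_measure_extend (upd_none s v w).
    by rewrite sub1set setCU in_setI vW in_setC.
  by apply/set0Pn; exists v; rewrite inE.
- rewrite setUC; apply: attr_measure_extend => //.
    by rewrite sub1set setCU in_setI vW in_setC.
  by apply/set0Pn; exists v; rewrite inE.
- move: tT; rewrite inE => /andP[_ tW]; rewrite -setUDr.
  apply: attr_measure_extend.
  - by rewrite setCU -setDE; apply: setSD.
  - by rewrite setD_eq0.
  - by move=> x; rewrite mergeE; case: (s x).
- by apply: attr_measure_assign sv; apply: (subsetP (attr_base I)).
Qed.

Section Component.
Variables (Z : {set V}) (s : strat V).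
Hypothesis I : attr_inv Z s.
Local Notation Y := (core owner E W a s Z).
Local Notation H := (hgraph owner E W a s Y).
Variables (C : {set V}) (x0 y0 : V).
Hypotheses (bC : bscc H C) (x0C : x0 \in C) (Hx0y0 : H x0 y0).

Lemma component_core : C \subset Y.
Proof.
have x0Y : x0 \in Y by case/and3P: Hx0y0.
apply/subsetP=> x xC; apply: (connect_closed (A := Y)) x0Y (bscc_connect bC x0C xC).
by move=> u v _ /and3P[].
Qed.

Lemma component_sub : C \subset Z.
Proof. exact: subset_trans component_core (core_sub _ _ _ _). Qed.

Lemma component_parity : odd (prs pr C) = a.
Proof.
have C0 : 0 < #|C| by apply/card_gt0P; exists x0.
have [m mC m_max] := eq_bigmax_cond pr C0; rewrite /prs m_max.
have [c cyc cC] := bscc_cycle bC x0C Hx0y0 mC.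
have region_cyc : cycle (region_graph Z s) (m :: c).
  have /subsetP YZ := core_sub W a s Z.
  by apply: (sub_cycle _ cyc) => x y /and3P[/YZ xZ /YZ yZ Hxy]; rewrite /region_graph xZ yZ.
rewrite -(attr_cycles I _ region_cyc) //; congr odd; symmetry.
apply: (bigmax_seq_eq _ (mem_head m c)) => // y; rewrite inE => /predU1P[->//|/cC yC].
by rewrite -m_max; apply: (leq_bigmax_cond (P := mem C)).
Qed.

Lemma hgraph_tgraph x y : x \in C -> y \in C ->
  H x y = tgraph owner E pr C (restrict s C) x y.
Proof.
move=> xC yC; have /subsetP CY := component_core; have /subsetP CZ := component_sub.
rewrite /hgraph /tgraph xC yC !CY // component_parity /restrict ffunE xC /=.
by case: ifP; rewrite // (subsetP (attr_sub I)) ?CZ ?andbT.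
Qed.

Lemma component_opponent u y : u \in C -> owner u != a -> y \in W -> E u y -> y \in C.
Proof.
move=> uC ou yW Euy; have uY := subsetP component_core u uC.
apply: (bscc_closed bC) uC _.
by rewrite /hgraph uY (core_opponent uY ou yW Euy) (negbTE ou) Euy yW.
Qed.

Lemma component_tangle : is_tangle owner E pr (C, restrict s C).
Proof.
rewrite /is_tangle /= component_parity; split.
- by apply/set0Pn; exists x0.
- move=> v vC ov; have vY := subsetP component_core v vC.
  have [w sv wY] := core_strat vY ov.
  have Hvw : H v w by rewrite /hgraph vY wY ov eqxx sv /=.
  have [_ _ Evw _] := attr_strat I sv.
  by exists w; rewrite ?(bscc_closed bC vC Hvw) // /restrict ffunE vC.
- by move=> v w; rewrite /restrict ffunE; case: ifP => // vC /(attr_strat I)[].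
- move=> u v uC vC; have /connectP [p up ->] := bscc_connect bC uC vC.
  have pC : all [in C] (u :: p).
    apply/allP=> z /(path_connect up).
    exact: (connect_closed (A := C)) (bscc_closed bC) uC.
  apply/connectP; exists p => //; apply: (sub_in_path _ pC up).
  by move=> x y xC yC; rewrite hgraph_tgraph.
move=> c c0 cyc; apply: (attr_cycles I c0); apply: (sub_cycle _ cyc) => x y txy.
have /and3P[xC yC _] := txy; rewrite -hgraph_tgraph // in txy.
have /subsetP CZ := component_sub.
by have /and3P[_ _ e] := txy; rewrite /region_graph !CZ.
Qed.

End Component.

Lemma extract_tangle Z s t : attr_inv Z s -> t \in extract owner E W a s Z ->
  [/\ is_tangle owner E pr t, tpl pr t = a, t.1 \subset Z &
      escapes owner E pr setT t \subset R].
Proof.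
move=> I /imsetP[C]; rewrite inE => /andP[bC /exists_inP[x0 x0C /exists_inP[y0 _ Hx0y0]]] ->.
have tg := component_tangle I bC x0C Hx0y0.
have par := component_parity I bC x0C Hx0y0.
split=> //=; first exact: component_sub bC x0C Hx0y0.
apply/subsetP=> y; rewrite !inE /tpl /= par => /andP[yC /exists_inP[u uC /andP[ou Euy]]].
apply: contraT => yR; have := component_opponent bC x0C Hx0y0 uC ou _ Euy.
by rewrite in_setC yR (negbTE yC) => /(_ isT).
Qed.

End Attractor.

(* The last clause is what makes the tangles extracted at the end of a round new. *)
Definition round_inv (T : {set tangle V}) (R : {set V}) : Prop :=
  [/\ tangles T,
      forall v, v \in ~: R -> exists2 w, w \in ~: R & E v w &
      forall t, t \in T -> t.1 \subset ~: R -> escapes owner E pr setT t \subset R ->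
        escapes owner E pr setT t = set0].

Definition state_inv (st : sstate V) : Prop :=
  match st with
  | SLoop T Y R => [/\ round_inv T R, tangles Y & (~: R == set0 -> ~~ (Y \subset T))]
  | SAttr T Y R Z s => [/\ round_inv T R, tangles Y, ~: R != set0 & attr_inv R Z s]
  | SDone _ t => is_tangle owner E pr t /\ dominion owner E pr (tpl pr t) t.1
  end.

Lemma owner_neq (b : bool) v : owner v != b -> owner v = ~~ b.
Proof. by case: (owner v); case: b. Qed.

Section Saturated.
Variables (T Y : {set tangle V}) (R Z : {set V}) (s : strat V).
Hypothesis inv : state_inv (SAttr T Y R Z s).
Hypothesis stuck : forall zs, ~ astep owner E pr T R (Z, s) zs.
Local Notation a := (sub_pl pr R).
Local Notation X := (extract owner E (~: R) a s Z).

Lemma saturated_total v : v \in ~: (R :|: Z) -> exists2 w, w \in ~: (R :|: Z) & E v w.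
Proof.
have [[_ total _] _ _ _] := inv.
rewrite setCU !inE => /andP[vR vZ]; have vW : v \in ~: R by rewrite inE.
have [/eqP ov|/owner_neq ov] := boolP (owner v == a).
  have [w wW Evw] := total v vW; exists w => //; rewrite inE wW inE.
  by apply/negP=> wZ; apply: stuck (AS_pl pr _ _ s vW vZ ov Evw wZ).
apply: contrapT => no_exit; apply: stuck (AS_op pr _ _ s vW vZ ov _) => w wW Evw.
by apply: contrapT => wZ; apply: no_exit; exists w; rewrite // inE wW inE; apply/negP.
Qed.

Lemma saturated_no_trapped t : t \in T -> t.1 \subset ~: (R :|: Z) ->
  escapes owner E pr setT t \subset R :|: Z -> escapes owner E pr setT t = set0.
Proof.
have [[_ _ trapped] _ _ _] := inv; move=> tT tRZ esc.
have tW : t.1 \subset ~: R by apply: subset_trans tRZ _; rewrite setCU subsetIl.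
have [|/subsetPn [y y_esc yR]] := boolP (escapes owner E pr setT t \subset R).
  exact: trapped.
have yZ : y \in Z by move: (subsetP esc y y_esc); rewrite inE (negbTE yR).
move: (y_esc); rewrite !inE /= => /andP[yt /exists_inP[u ut /andP[ou Euy]]].
have := subsetP tRZ u ut; rewrite setCU !inE => /andP[uR uZ].
have uW : u \in ~: R by rewrite inE.
have [ta|ta] := eqVneq (tpl pr t) a; last first.
  have ou' : owner u = a by move: ou ta; case: (owner u); case: (tpl pr t); case: (a).
  by case: (stuck (AS_pl pr _ _ s uW uZ ou' Euy yZ)).
have tS : t \in subT T R by rewrite inE tT.
have escW : escapes owner E pr (~: R) t \subset Z.
  apply/subsetP=> x; rewrite !inE => /andP[xR x_esc].
  have : x \in escapes owner E pr setT t by rewrite !inE.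
  by move/(subsetP esc); rewrite inE (negbTE xR).
have esc0 : escapes owner E pr (~: R) t != set0.
  by apply/set0Pn; exists y; rewrite !inE yR yt; apply/exists_inP; exists u; rewrite ?ou.
have tZ : ~~ (t.1 \subset Z) by apply/subsetPn; exists u.
by case: (stuck (AS_tg _ s tS ta esc0 escW tZ)).
Qed.

Lemma saturated_extract : ~: (R :|: Z) = set0 -> exists t, t \in X.
Proof.
have [[_ total _] _ R0 I] := inv; move=> full.
have inZ x : x \in ~: R -> x \in Z.
  move=> xW; apply: contraT => xZ.
  have : x \in ~: (R :|: Z) by rewrite setCU inE xW inE.
  by rewrite full inE.
have strat v : v \in Z -> owner v = a -> exists2 w, s v = Some w & w \in Z.
  move=> vZ ov; case sv: (s v) => [w|]; first by exists w => //; have [] := attr_strat I sv.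
  have vA := attr_undef I vZ ov sv; have [w wW Evw] := total v (subsetP (attr_sub I) v vZ).
  by case: (stuck (AS_base pr _ vA ov sv wW Evw (inZ w wW))).
have /subsetP ZY : Z \subset core owner E (~: R) a s Z.
  apply: core_max => //; apply/forall_inP=> v vZ; case: ifP => [/eqP ov|_].
    by have [w -> wZ] := strat v vZ ov.
  by apply/forall_inP=> w wW; apply/implyP=> _; apply: inZ.
have /subsetP YZ := core_sub (~: R) a s Z.
have [v0 v0A] := sub_base_nonempty R0; have v0Z := subsetP (attr_base I) v0 v0A.
pose H := hgraph owner E (~: R) a s (core owner E (~: R) a s Z).
have [C /andP[bC edge]] : exists C, bscc H C && [exists x in C, exists y in C, H x y].
  apply: (bscc_exists (x0 := v0)) => x /(connect_closed (A := Z)) xZ.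
  have {}xZ : x \in Z by apply: xZ v0Z => u w _ /and3P[_ /YZ].
  have [/eqP ox|ox] := boolP (owner x == a).
    by have [w sx wZ] := strat x xZ ox; exists w; rewrite /H /hgraph !ZY // ox sx !eqxx.
  have [w wW Exw] := total x (subsetP (attr_sub I) x xZ).
  by exists w; rewrite /H /hgraph (negbTE ox) Exw wW !ZY ?(inZ w wW).
by exists (C, restrict s C); apply/imsetP; exists C; rewrite // inE bC.
Qed.

Lemma saturated_new_tangle : ~: (R :|: Z) = set0 ->
  (forall t, t \in X -> escapes owner E pr setT t != set0) -> ~~ (X \subset T).
Proof.
move=> full esc; have [[_ _ trapped] _ _ I] := inv.
have [t tX] := saturated_extract full; apply/subsetPn; exists t => //; apply/negP => tT.
have [_ _ tZ escR] := extract_tangle I tX.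
by have := esc t tX; rewrite (trapped t tT (subset_trans tZ (attr_sub I)) escR) eqxx.
Qed.

End Saturated.

Section Search.
Hypothesis hE : forall v, exists w, E v w.
Hypothesis hV : 0 < #|V|.

Lemma round_inv0 T : tangles T -> round_inv T set0.
Proof.
move=> TT; split=> //; first by move=> v _; have [w Evw] := hE v; exists w; rewrite ?setC0 ?inE.
by move=> t _ _; rewrite subset0 => /eqP.
Qed.

Lemma search_step_inv st st' : state_inv st -> search_step owner E pr st st' -> state_inv st'.
Proof.
move=> + h; case: h => {st st'}.
- by move=> T Y R R0 [RI TY _]; split=> //; apply: attr_inv_start.
- move=> T Y R _ [[TT _ _] TY _]; split; last by rewrite (negbTE (setC0_neq0 hV)).
    by apply: round_inv0 => t; rewrite inE => /orP[/TT|/TY].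
  by move=> t; rewrite inE.
- move=> T Y R Z s Z' s' step [RI TY R0 I]; split=> //; have [TT _ _] := RI.
  by have /= := attr_step_inv TT step I.
- move=> T Y R Z s t _ tX /eqP no_esc [_ _ _ I].
  have [tg _ _ _] := extract_tangle I tX; split=> //.
  exact: tangle_dominion tg no_esc.
move=> T Y R Z s stuck esc inv; have [[TT _ _] TY _ I] := inv; split.
- by split=> //; [apply: saturated_total inv stuck|apply: saturated_no_trapped inv stuck].
- by move=> t; rewrite inE => /orP[/TY|/(extract_tangle I)[]].
move=> /eqP full; apply: contra (saturated_new_tangle inv stuck full esc).
by apply: subset_trans; apply: subsetUr.
Qed.

Definition tangle_measure (st : sstate V) : nat :=
  match st with SLoop T _ _ | SAttr T _ _ _ _ | SDone T _ => #|~: T| end.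

Definition round_measure (st : sstate V) : nat :=
  match st with
  | SLoop _ _ R => 3 * #|~: R|
  | SAttr _ _ R Z s => (attr_measure R Z s).+1
  | SDone _ _ => 0
  end.

Lemma search_step_measure st st' : state_inv st -> search_step owner E pr st st' ->
  (tangle_measure st' < tangle_measure st) ||
  (tangle_measure st' == tangle_measure st) && (round_measure st' < round_measure st).
Proof.
move=> + h; case: h => {st st'} /=.
- by move=> T Y R R0 _; rewrite eqxx attr_measure_start ?orbT.
- by move=> T Y R R0 [_ _ /(_ R0) new]; rewrite card_setCU_lt.
- by move=> T Y R Z s Z' s' step [_ _ _ I]; rewrite eqxx ltnS (attr_step_measure step I) orbT.
- move=> T Y R Z s t _ _ _ _; have := card_setCU_le T Y.
  by rewrite leq_eqVlt => /orP[/eqP->|->]; rewrite ?eqxx ?orbT.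
by move=> T Y R Z s _ _ _; rewrite eqxx ltnS leq_addr orbT.
Qed.

Lemma search_terminates st : state_inv st -> Acc (fun st' st => search_step owner E pr st st') st.
Proof.
apply: (acc_lex (f := tangle_measure) (g := round_measure)) => x y Ix xy.
by split; [apply: search_step_inv Ix xy|apply: search_step_measure Ix xy].
Qed.

Lemma state_inv_reachable st st' :
  clos_refl_trans _ (search_step owner E pr) st st' -> state_inv st -> state_inv st'.
Proof.
elim=> [x y xy|//|x y z _ IHxy _ IHyz] Ix; last exact: IHyz (IHxy Ix).
exact: search_step_inv Ix xy.
Qed.

End Search.

Lemma search_progress st : is_done st \/ exists st', search_step owner E pr st st'.
Proof.
case: st => [T Y R|T Y R Z s|T t]; [right|right|by left].
  have [R0|R0] := boolP (~: R == set0); first by eexists; apply: SS_round.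
  by eexists; apply: SS_start.
have [[[Z' s'] step]|no_step] := pselect (exists zs, astep owner E pr T R (Z, s) zs).
  by eexists; apply: SS_attr step.
have stuck zs : ~ astep owner E pr T R (Z, s) zs by move=> step; apply: no_step; exists zs.
pose X := extract owner E (~: R) (sub_pl pr R) s Z.
have [/exists_inP[t tX esc]|dom] := boolP [exists t in X, escapes owner E pr setT t == set0].
  by eexists; apply: SS_return stuck tX esc.
eexists; apply: SS_next stuck _ => t tX; apply: contraNN dom => esc.
by apply/exists_inP; exists t.
Qed.

End Game.

Theorem lemma9 (V : finType) (owner : V -> bool) (E : rel V) (pr : V -> nat)
  (hE : forall v : V, exists w, E v w) (hV : 0 < #|V|)
  (T : {set tangle V})
  (hT : forall t, t \in T -> is_tangle owner E pr t) :
  let s0 := SLoop T set0 set0 in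
  (* every run of search(G,T) terminates *)
  Acc (fun s' s => search_step owner E pr s s') s0 /\
  (* no run gets stuck before returning *)
  (forall s, clos_refl_trans _ (search_step owner E pr) s0 s ->
     is_done s \/ exists s', search_step owner E pr s s') /\
  (* every returned (T'', t): t is a tangle and a dominion of pr(t) mod 2 *)
  (forall T'' t, clos_refl_trans _ (search_step owner E pr) s0 (SDone T'' t) ->
     is_tangle owner E pr t /\ dominion owner E pr (tpl pr t) t.1).
Proof.
move=> s0; have inv0 : state_inv owner E pr s0.
  split; [exact: round_inv0 | by move=> t; rewrite inE | by rewrite (negbTE (setC0_neq0 hV))].
split; first exact: search_terminates inv0.
split; first by move=> st _; apply: search_progress.
by move=> T'' t /(state_inv_reachable hE hV); apply.
Qed.
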